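(* Let $K$ be a field with $\mathrm{char}(K) = 0$ or $\mathrm{char}(K) > n$, let $1 \le d \le n$ and $N \ge n+d$. Then in $K[x_1,\dots,x_N]$, $$(S_N.\,e_n^d(x_1,\dots,x_n)) = (S_N.\,x_1\cdots x_d).$$
   Context: $e_n^d(x_1,\dots,x_n)$ denotes the elementary symmetric polynomial of degree $d$ in $x_1,\dots,x_n$. $S_N$ acts on $K[x_1,\dots,x_N]$ by permuting variables; $(S_N.g)$ denotes the ideal generated by the $S_N$-orbit of $g$. *)

From HB Require Import structures.
From mathcomp Require Import all_boot all_order all_algebra all_fingroup.
From mathcomp Require Export mpoly.
Set Implicit Arguments. Unset Strict Implicit. Unset Printing Implicit Defensive.
Import GRing.Theory.
Local Open Scope ring_scope.

(* Variables x_1..x_N are 'X_0 .. 'X_(N-1) (0-indexed). *)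

Definition esym_first (K : comRingType) (N n d : nat) : {mpoly K[N]} :=
  \sum_(h : {set 'I_N} | (#|h| == d) && [forall i in h, (i < n)%N])
     \prod_(i in h) 'X_i.

Definition prod_first (K : comRingType) (N d : nat) : {mpoly K[N]} :=
  \prod_(i : 'I_N | (i < d)%N) 'X_i.

Definition orbit_ideal (K : comRingType) (N : nat) (g : {mpoly K[N]})
  : {mpoly K[N]} -> Prop :=
  fun p => exists s : seq ('S_N * {mpoly K[N]}),
    p = \sum_(x <- s) x.2 * msym x.1 g.

From mathcomp Require Import all_boot all_order all_algebra all_fingroup.
From mathcomp Require Import mpoly.
From mathcomp Require Import ring zify.
Set Implicit Arguments. Unset Strict Implicit. Unset Printing Implicit Defensive.
Import GRing.Theory.
Local Open Scope ring_scope.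

(* Both ideals are generated by orbits: the S_N-orbit of x_1...x_d is the
   set of products x_u of d distinct variables, and the orbit of
   e_n^d(x_1..x_n) is the set of the e_d(A), A a set of n variables.

   (⊆) e_d(A) is a sum of products of d distinct variables.

   (⊇) By induction on k: if k <= n, n + k <= N and 1, ..., n are invertible
   in K, every product x_u of k distinct variables lies in the ideal I
   generated by the e_k(A), |A| = n.  For distinct b, c, u with
   |u| = k - 1, the identity
       (x_b - x_c) e_{k-1}(A') = e_k(b :: A') - e_k(c :: A'),
   with the induction hypothesis for the other N - 2 variables and n - 1,
   gives (x_b - x_c) x_u ∈ I: modulo I a squarefree monomial is unchanged
   when one of its variables is swapped for another.  Hence each of the
   C(n, k) monomials of e_k(A) is congruent to x_u when u is a prefix of A,
   so C(n, k) x_u ∈ I, and C(n, k) is invertible. *)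

Section IdealSpan.
Variable R : comRingType.
Implicit Types (S T : R -> Prop) (p q : R).

Inductive ideal_span S : R -> Prop :=
| ideal_span0 : ideal_span S 0
| ideal_span_cons c g p : S g -> ideal_span S p -> ideal_span S (c * g + p).

Lemma ideal_span_gen S g : S g -> ideal_span S g.
Proof.
move=> Sg; rewrite -[g]addr0 -[g]mul1r.
by apply: ideal_span_cons => //; apply: ideal_span0.
Qed.

Lemma ideal_spanD S p q : ideal_span S p -> ideal_span S q -> ideal_span S (p + q).
Proof.
move=> Sp Sq; elim: Sp => [|c g p' Sg _ IH]; first by rewrite add0r.
by rewrite -addrA; apply: ideal_span_cons.
Qed.

Lemma ideal_spanM S q p : ideal_span S p -> ideal_span S (q * p).
Proof.
elim=> [|c g p' Sg _ IH]; first by rewrite mulr0; apply: ideal_span0.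
by rewrite mulrDr mulrA; apply: ideal_span_cons.
Qed.

Lemma ideal_spanB S p q : ideal_span S p -> ideal_span S q -> ideal_span S (p - q).
Proof. by move=> Sp Sq; apply: ideal_spanD => //; rewrite -mulN1r; apply: ideal_spanM. Qed.

Lemma ideal_span_eq S p q : ideal_span S p -> p = q -> ideal_span S q.
Proof. by move=> Sp <-. Qed.

Lemma ideal_span_mull S T q p :
  (forall g, S g -> ideal_span T (q * g)) -> ideal_span S p -> ideal_span T (q * p).
Proof.
move=> qST; elim=> [|c g p' Sg _ IH]; first by rewrite mulr0; apply: ideal_span0.
by rewrite mulrDr mulrCA; apply: ideal_spanD IH; apply: ideal_spanM; apply: qST.
Qed.

Lemma ideal_span_sub S T p :
  (forall g, S g -> ideal_span T g) -> ideal_span S p -> ideal_span T p.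
Proof.
by move=> ST Sp; rewrite -[p]mul1r; apply: ideal_span_mull Sp => g /ST; rewrite mul1r.
Qed.

Lemma ideal_span_cancel S c c' p : c' * c = 1 -> ideal_span S (c * p) -> ideal_span S p.
Proof. by move=> c'c /(ideal_spanM c'); rewrite mulrA c'c mul1r. Qed.

End IdealSpan.

Definition n_invertible (K : comRingType) (n : nat) :=
  forall m, (0 < m <= n)%N -> exists c : K, c * m%:R = 1.

Lemma fact_invertible (K : comRingType) n :
  n_invertible K n -> exists c : K, c * n`!%:R = 1.
Proof.
elim: n => [_|n IH inv_n]; first by exists 1; rewrite fact0 mulr1.
have [|c cn] := IH; first by move=> m /andP[m0 mn]; apply: inv_n; rewrite m0 ltnW.
have [c' cn'] : exists c' : K, c' * n.+1%:R = 1 by apply: inv_n; rewrite leqnn.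
by exists (c' * c); rewrite factS natrM mulrACA cn' cn mulr1.
Qed.

Lemma binom_invertible (K : comRingType) n k :
  n_invertible K n -> (k <= n)%N -> exists c : K, c * 'C(n, k)%:R = 1.
Proof.
move=> inv_n kn; have [c cn] := fact_invertible inv_n.
exists (c * (k`! * (n - k)`!)%:R).
by rewrite -mulrA -natrM mulnC bin_fact.
Qed.

Lemma field_n_invertible (F : fieldType) n :
  (forall p, p \in [pchar F] -> (n < p)%N) -> n_invertible F n.
Proof.
move=> hchar m /andP[m0 mn]; exists (m%:R^-1); apply: mulVf.
rewrite natf_neq0_pchar; apply/pnatP => // p p_pr /(dvdn_leq m0) pm.
by apply/negP => /hchar; rewrite ltnNge (leq_trans pm mn).
Qed.

Lemma uniq_extend (T : eqType) (V u : seq T) m :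
  uniq V -> uniq u -> {subset u <= V} -> (size u <= m <= size V)%N ->
  exists r, [/\ uniq (u ++ r), {subset u ++ r <= V} & size (u ++ r) = m].
Proof.
move=> uV uu sub /andP[um mV].
pose rest := [seq x <- V | x \notin u].
have size_rest : size rest = (size V - size u)%N.
  have perm_u : perm_eq [seq x <- V | x \in u] u.
    apply: uniq_perm; [exact: filter_uniq | exact: uu |].
    by move=> x; rewrite mem_filter; case xu: (x \in u); rewrite //= sub.
  by rewrite -(count_predC (mem u) V) -!size_filter (perm_size perm_u) addKn.
exists (take (m - size u) rest); split.
- rewrite cat_uniq uu take_uniq ?filter_uniq // andbT.
  by apply/hasPn => x /mem_take; rewrite mem_filter => /andP[].
- move=> x; rewrite mem_cat => /orP[/sub //|/mem_take].
  by rewrite mem_filter => /andP[].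
- by rewrite size_cat size_takel ?size_rest; lia.
Qed.

Section ListsOfVariables.
Variables (K : comRingType) (N : nat).
Local Notation MP := {mpoly K[N]}.
Implicit Types (s t u V : seq 'I_N).

Fixpoint esym_seq s k : MP :=
  match s with
  | [::] => if k is 0 then 1 else 0
  | b :: s' => if k is k'.+1 then esym_seq s' k + 'X_b * esym_seq s' k' else 1
  end.

Definition Xprod u : MP := \prod_(i <- u) 'X_i.

Lemma esym_seq0 s : esym_seq s 0 = 1. Proof. by case: s. Qed.

Lemma esym_seqS b s k : esym_seq (b :: s) k.+1 = esym_seq s k.+1 + 'X_b * esym_seq s k.
Proof. by []. Qed.

Lemma esym_seq_swap b c s k :
  ('X_b - 'X_c) * esym_seq s k = esym_seq (b :: s) k.+1 - esym_seq (c :: s) k.+1.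
Proof. by rewrite !esym_seqS; ring. Qed.

Lemma Xprod_nil : Xprod [::] = 1. Proof. by rewrite /Xprod big_nil. Qed.
Lemma Xprod_cons b u : Xprod (b :: u) = 'X_b * Xprod u. Proof. by rewrite /Xprod big_cons. Qed.
Lemma Xprod_cat u t : Xprod (u ++ t) = Xprod u * Xprod t. Proof. by rewrite /Xprod big_cat. Qed.

Lemma Xprod_rcons u c : Xprod (rcons u c) = Xprod u * 'X_c.
Proof. by rewrite -cats1 Xprod_cat Xprod_cons Xprod_nil mulr1. Qed.

Lemma msym_X (s : 'S_N) i : msym s ('X_i : MP) = 'X_(s i).
Proof.
rewrite msymX; congr mpolyX; apply/mnmP => j; rewrite mnmE !mnm1E.
by rewrite (canF_eq (permK s)).
Qed.

Lemma msym_Xprod (s : 'S_N) u : msym s (Xprod u) = Xprod (map s u).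
Proof. by rewrite /Xprod rmorph_prod big_map; apply: eq_bigr => i _; apply: msym_X. Qed.

Lemma msym_esym_seq (s : 'S_N) u k : msym s (esym_seq u k) = esym_seq (map s u) k.
Proof.
elim: u k => [|b u IH] [|k] /=; rewrite ?msym1 ?msym0 //.
by rewrite msymD msymM msym_X !IH.
Qed.

Definition subsets_sum (A : {set 'I_N}) k : MP :=
  \sum_(h : {set 'I_N} | (#|h| == k) && (h \subset A)) \prod_(i in h) 'X_i.

Lemma subsets_sum0 A : subsets_sum A 0 = 1.
Proof.
rewrite /subsets_sum (big_pred1 set0) ?big_set0 // => h /=.
by rewrite cards_eq0; case: eqP => [->|]; rewrite ?sub0set.
Qed.

Lemma subsets_sum_set0 k : subsets_sum set0 k.+1 = 0.
Proof.
rewrite /subsets_sum big_pred0 // => h; rewrite subset0.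
by case: (h =P set0) => [->|]; rewrite ?cards0 ?andbF.
Qed.

(* Pascal's rule: split the subsets of [b |: A] according to whether they
   contain [b]. *)
Lemma subsets_sumU1 (b : 'I_N) (A : {set 'I_N}) k : b \notin A ->
  subsets_sum (b |: A) k.+1 = subsets_sum A k.+1 + 'X_b * subsets_sum A k.
Proof.
move=> bA; rewrite /subsets_sum (bigID (fun h : {set 'I_N} => b \in h)) /= addrC.
congr (_ + _).
  apply: eq_bigl => h; case bh: (b \in h); rewrite ?andbF ?andbT.
    by symmetry; apply/negbTE/negP => /andP[_ /subsetP /(_ b bh)]; rewrite (negbTE bA).
  by rewrite -[in RHS](setU1K bA) subsetD1 bh andbT.
rewrite mulr_sumr (reindex_onto (fun h => b |: h) (fun h => h :\ b)) /=; last first.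
  by move=> h /andP[_ bh]; apply: setD1K.
apply: eq_big => h.
  case bh: (b \in h).
    have -> : (h \subset A) = false.
      by apply/negbTE/negP => /subsetP /(_ b bh); rewrite (negbTE bA).
    have -> : ((b |: h) :\ b == h) = false.
      by apply/negbTE/negP => /eqP E; move: bh; rewrite -E !inE eqxx.
    by rewrite !andbF.
  rewrite setU1K ?bh // eqxx setU11 !andbT cardsU1 bh /= add1n eqSS.
  by rewrite subUset sub1set setU11 -[in RHS](setU1K bA) subsetD1 bh andbT.
move=> /andP[_ /eqP Eh].
have bh : b \notin h by rewrite -Eh setD11.
by rewrite big_setU1.
Qed.

Lemma esym_seq_subsets s k : uniq s -> esym_seq s k = subsets_sum [set:: s] k.
Proof.
elim: s k => [|b s IH] [|k] /=; rewrite ?subsets_sum0 // ?set_nil ?subsets_sum_set0 //.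
case/andP => bs us; rewrite set_cons subsets_sumU1 ?IH //.
by rewrite inE.
Qed.

Definition firsts m : seq 'I_N := [seq i : 'I_N <- enum 'I_N | (i < m)%N].

Lemma firsts_val m : (m <= N)%N -> map val (firsts m) = iota 0 m.
Proof.
move=> mN; rewrite /firsts (_ : map val _ = [seq x <- map val (enum 'I_N) | (x < m)%N]);
  last by rewrite filter_map.
rewrite val_enum_ord -(subnKC mN) iotaD filter_cat.
rewrite (eq_in_filter (a2 := predT)) ?filter_predT; last by move=> x; rewrite mem_iota.
rewrite (eq_in_filter (a2 := pred0)) ?filter_pred0 ?cats0 //.
by move=> x; rewrite mem_iota /= => /andP[/leq_gtF ->].
Qed.

Lemma firsts_uniq m : uniq (firsts m).
Proof. by rewrite filter_uniq ?enum_uniq. Qed.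

Lemma firsts_size m : (m <= N)%N -> size (firsts m) = m.
Proof. by move=> mN; rewrite -(size_map val) firsts_val // size_iota. Qed.

Lemma esym_firstE n d : esym_first K N n d = esym_seq (firsts n) d.
Proof.
rewrite esym_seq_subsets ?firsts_uniq //; apply: eq_bigl => h; congr (_ && _).
apply/forall_inP/subsetP => H x xh.
  by rewrite inE mem_filter mem_enum andbT; apply: H.
by move: (H x xh); rewrite inE mem_filter => /andP[].
Qed.

Lemma prod_firstE d : prod_first K N d = Xprod (firsts d).
Proof. by rewrite /prod_first /Xprod big_filter big_enum_cond. Qed.

Lemma perm_onto_firsts m u : uniq u -> size u = m ->
  exists s : 'S_N, map s (firsts m) = u.
Proof.
case: u => [|x0 u'] uu su.
  exists 1%g; rewrite -su /firsts (eq_filter (a2 := pred0)) ?filter_pred0 //.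
set u := x0 :: u' in uu su *.
have u_enum : {subset u <= enum 'I_N} by move=> x; rewrite mem_enum.
have uN : (size u <= N <= size (enum 'I_N))%N.
  by rewrite size_enum_ord leqnn andbT -{2}(size_enum_ord N) uniq_leq_size.
have [r [uw _ sw]] := uniq_extend (enum_uniq _) uu u_enum uN.
have mN : (m <= N)%N by rewrite -sw size_cat su leq_addr.
have nth_inj : injective (fun i : 'I_N => nth x0 (u ++ r) i).
  by move=> i j /eqP; rewrite nth_uniq ?sw // => /eqP; apply: val_inj.
exists (perm nth_inj); rewrite (eq_map (permE nth_inj)).
rewrite (_ : [seq _ | i <- _] = map (nth x0 (u ++ r)) (map val (firsts m))).
  by rewrite firsts_val // map_nth_iota0 ?sw // take_size_cat.
by rewrite -map_comp.
Qed.

Definition orbit (g : MP) : MP -> Prop := fun h => exists s : 'S_N, h = msym s g.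

Lemma orbit_idealE g p : orbit_ideal g p <-> ideal_span (orbit g) p.
Proof.
split.
  case=> sq ->; elim: sq => [|x sq IH]; first by rewrite big_nil; apply: ideal_span0.
  by rewrite big_cons; apply: ideal_span_cons IH; exists x.1.
elim=> [|c h q [s ->] _ [sq Eq]]; first by exists [::]; rewrite big_nil.
by exists ((s, c) :: sq); rewrite big_cons Eq.
Qed.

Definition squarefree_monomials s k : MP -> Prop :=
  fun h => exists u, [/\ uniq u, size u = k, {subset u <= s} & h = Xprod u].

Lemma esym_seq_in_monomials s k :
  uniq s -> ideal_span (squarefree_monomials s k) (esym_seq s k).
Proof.
have one_in k' s' : k' = 0%N -> ideal_span (squarefree_monomials s' k') 1.
  by move=> ->; apply: ideal_span_gen; exists [::]; rewrite Xprod_nil.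
elim: s k => [[|k] _|b s IH [|k] /andP[bs us]] /=; try exact: one_in.
  exact: ideal_span0.
apply: ideal_spanD.
  apply: ideal_span_sub (IH k.+1 us) => h [u [uu su ss ->]]; apply: ideal_span_gen.
  by exists u; split => // x /ss; rewrite inE orbC => ->.
apply: ideal_span_mull (IH k us) => h [u [uu su ss ->]]; apply: ideal_span_gen.
exists (b :: u); split => //=; last by rewrite Xprod_cons.
- by rewrite uu andbT; apply: contra bs; apply: ss.
- by rewrite su.
- by move=> x; rewrite !inE => /orP[->|/ss ->]; rewrite ?orbT.
Qed.

Section SwapCongruence.
Variables (S : MP -> Prop) (V : seq 'I_N) (k : nat).
Hypothesis swap : forall u b c, uniq (b :: c :: u) -> {subset b :: c :: u <= V} ->
  (size u).+1 = k -> ideal_span S (('X_b - 'X_c) * Xprod u).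

Lemma swap_prefix t b s i : (i < size s)%N -> uniq (t ++ b :: s) ->
  {subset t ++ b :: s <= V} -> (size t + i).+1 = k ->
  ideal_span S (('X_b - 'X_(nth b s i)) * Xprod (t ++ take i s)).
Proof.
move=> lt uts sub sz; set c := nth b s i.
have prefix : take (size t + i.+2) (t ++ b :: s) = t ++ b :: rcons (take i s) c.
  by rewrite take_cat ltnNge leq_addr /= addKn /= (take_nth b lt).
have perm : perm_eq (t ++ b :: rcons (take i s) c) (b :: c :: (t ++ take i s)).
  by apply/seq.permP => f; rewrite /= -cats1 !count_cat /= count_cat /=; lia.
apply: swap.
- by rewrite -(perm_uniq perm) -prefix take_uniq.
- by move=> x; rewrite -(perm_mem perm) -prefix => /mem_take /sub.
- by rewrite size_cat (size_takel (ltnW lt)).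
Qed.

Lemma esym_seq_congr s t i : uniq (t ++ s) -> {subset t ++ s <= V} ->
  (size t + i)%N = k ->
  ideal_span S (Xprod t * esym_seq s i - 'C(size s, i)%:R * (Xprod t * Xprod (take i s))).
Proof.
elim: s t i => [|b s IH] t [|i] uts sub sz;
  rewrite ?esym_seq0 ?bin0 ?take0 ?Xprod_nil ?mulr1 ?mul1r ?subrr //=; try exact: ideal_span0.
  by rewrite bin0n mul0r subr0 mulr0; exact: ideal_span0.
have uts' : uniq ((t ++ [:: b]) ++ s) by rewrite -catA.
have sub' : {subset (t ++ [:: b]) ++ s <= V} by rewrite -catA.
have sub_ts : subseq (t ++ s) (t ++ b :: s) by rewrite cat_subseq // subseq_cons.
have uts1 : uniq (t ++ s) by apply: subseq_uniq uts.
have sub1 : {subset t ++ s <= V} by move=> x /(mem_subseq sub_ts) /sub.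
have IH1 := IH t i.+1 uts1 sub1 sz.
have IH2 := IH (t ++ [:: b]) i uts' sub' (ltac:(by rewrite size_cat addn1 addSnnS)).
rewrite Xprod_cat Xprod_cons Xprod_nil mulr1 in IH2; rewrite Xprod_cons binS natrD.
have [lt|le] := ltnP i (size s); last first.
  rewrite bin_small ?ltnS // in IH1 *.
  by apply: ideal_span_eq (ideal_spanD IH1 IH2) _; ring.
rewrite (take_nth b lt) Xprod_rcons in IH1.
have := swap_prefix lt uts sub (ltac:(by rewrite -sz addnS)).
rewrite Xprod_cat => swap_c.
apply: ideal_span_eq (ideal_spanD (ideal_spanD IH1 IH2)
  (ideal_spanM (- 'C(size s, i.+1)%:R) swap_c)) _; ring.
Qed.
End SwapCongruence.

Definition esym_gens n k V : MP -> Prop :=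
  fun g => exists A, [/\ uniq A, {subset A <= V}, size A = n & g = esym_seq A k].

Lemma swap_from_smaller n k V b c u : uniq V -> b != c -> b \in V -> c \in V ->
  ideal_span (esym_gens n k (rem c (rem b V))) (Xprod u) ->
  ideal_span (esym_gens n.+1 k.+1 V) (('X_b - 'X_c) * Xprod u).
Proof.
move=> uV bc bV cV; apply: ideal_span_mull => _ [A [uA sA szA ->]].
have memA x : x \in A -> [&& x != c, x != b & x \in V].
  by move/sA; rewrite (mem_rem_uniq _ (rem_uniq _ uV)) inE (mem_rem_uniq _ uV).
have gen_cons a : a \in V -> a \notin A -> esym_gens n.+1 k.+1 V (esym_seq (a :: A) k.+1).
  move=> aV aA; exists (a :: A); split => //=; [by rewrite aA | | by rewrite szA].
  by move=> x; rewrite inE => /orP[/eqP -> //|/memA /and3P[]].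
rewrite esym_seq_swap; apply: ideal_spanB; apply: ideal_span_gen; apply: gen_cons => //.
- by apply/negP => /memA; rewrite eqxx andbF.
- by apply/negP => /memA; rewrite eqxx.
Qed.

Lemma Xprod_in_esym_ideal k n V u : uniq V -> (k <= n)%N -> (n + k <= size V)%N ->
  n_invertible K n -> uniq u -> {subset u <= V} -> size u = k ->
  ideal_span (esym_gens n k V) (Xprod u).
Proof.
elim: k n V u => [|k IH] n V u uV kn nV inv_n uu uV' su;
  (* extend u to a list u ++ r of n distinct variables of V *)
  have [|r [uA sA szA]] := uniq_extend uV uu uV' (m := n);
  try by rewrite su kn (leq_trans (leq_addr _ _) nV).
  move/size0nil: su => ->; rewrite Xprod_nil -(esym_seq0 (u ++ r)).
  by apply: ideal_span_gen; exists (u ++ r).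
case: n kn nV inv_n szA => // n kn nV inv_n szA.
have swaps u' b c : uniq (b :: c :: u') -> {subset b :: c :: u' <= V} ->
    (size u').+1 = k.+1 -> ideal_span (esym_gens n.+1 k.+1 V) (('X_b - 'X_c) * Xprod u').
  rewrite /= inE negb_or -andbA => /and4P[bc bu' cu' uu'] sub [su'].
  have [bV cV] : b \in V /\ c \in V by rewrite !sub ?inE ?eqxx ?orbT.
  apply: swap_from_smaller => //; apply: IH => //.
  - by rewrite !rem_uniq.
  - rewrite !size_rem ?(mem_rem_uniq _ uV) ?inE 1?eq_sym ?bc //.
    (* the two occurrences of [size V] differ in their implicit type *)
    by set m := size V in nV *; lia.
  - by move=> m /andP[m0 mn]; apply: inv_n; rewrite m0 ltnW.
  - move=> x xu'; rewrite (mem_rem_uniq _ (rem_uniq _ uV)) inE (mem_rem_uniq _ uV) inE.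
    rewrite sub ?inE ?xu' ?orbT // andbT.
    by apply/andP; split; apply/eqP => E; [move: cu' | move: bu']; rewrite -E xu'.
have := esym_seq_congr swaps (t := [::]) uA sA (erefl _).
rewrite take_size_cat // Xprod_nil !mul1r szA => congr_A.
have binom_u : ideal_span (esym_gens n.+1 k.+1 V) ('C(n.+1, k.+1)%:R * Xprod u).
  have gen_A : esym_gens n.+1 k.+1 V (esym_seq (u ++ r) k.+1) by exists (u ++ r).
  by apply: ideal_span_eq (ideal_spanB (ideal_span_gen gen_A) congr_A) _; ring.
have [c cC] := binom_invertible inv_n kn.
apply: (ideal_span_cancel (c' := c%:MP)) binom_u.
by rewrite -(rmorph_nat (@mpolyC N K)) -rmorphM cC rmorph1.
Qed.

End ListsOfVariables.

Unset Implicit Arguments.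

Theorem proposition2p1 (K : fieldType) (n d N : nat)
  (hchar : forall p : nat, p \in [pchar K] -> (n < p)%N)
  (hd1 : (1 <= d)%N) (hdn : (d <= n)%N) (hN : (n + d <= N)%N) :
  forall p : {mpoly K[N]},
    orbit_ideal (esym_first K N n d) p <-> orbit_ideal (prod_first K N d) p.
Proof.
have firsts_perm m (s : 'S_N) : (m <= N)%N ->
    uniq (map s (firsts N m)) /\ size (map s (firsts N m)) = m.
  by move=> mN; rewrite map_inj_uniq ?firsts_uniq ?size_map ?firsts_size //; apply: perm_inj.
move=> p; rewrite !orbit_idealE; split; apply: ideal_span_sub => _ [s ->].
-
  have [us _] := firsts_perm n s (leq_trans (leq_addr d n) hN).
  rewrite esym_firstE msym_esym_seq.
  apply: ideal_span_sub (esym_seq_in_monomials K d us) => _ [u [uu su _ ->]].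
  have [t <-] := perm_onto_firsts uu su.
  by apply: ideal_span_gen; exists t; rewrite prod_firstE msym_Xprod.
-
  have [us su] := firsts_perm d s (leq_trans (leq_addl n d) hN).
  rewrite prod_firstE msym_Xprod.
  have nV : (n + d <= size (enum 'I_N))%N by rewrite size_enum_ord.
  have sub : {subset map s (firsts N d) <= enum 'I_N} by move=> x; rewrite mem_enum.
  have := Xprod_in_esym_ideal (enum_uniq _) hdn nV (field_n_invertible hchar) us sub su.
  apply: ideal_span_sub => _ [A [uA _ sA ->]].
  have [t <-] := perm_onto_firsts uA sA.
  by apply: ideal_span_gen; exists t; rewrite esym_firstE msym_esym_seq.
Qed.
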